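(* Let $\pi$ be a policy on a finite state space $\mathcal{S}$ whose induced Markov chain with transition matrix $P^\pi$ is irreducible and aperiodic, with stationary distribution $\mu^\pi$, and let $\lambda\in[0,1)$. Let $\Phi\in\mathbb{R}^{|\mathcal{S}|\times d}$ have full column rank. Then the solution set of the projected Bellman equation $\Phi\theta=\Pi_{D,W_\Phi}\mathcal{T}^{(\lambda)}(\Phi\theta)$ is $\mathcal{L}_{\Phi,e}:=\theta^*+S_{\Phi,e}$, where $\theta^*\in E_{\Phi,e}$ is the unique solution of $\Phi\theta=\Pi_{D,W_{E_{\Phi,e}}}\mathcal{T}^{(\lambda)}(\Phi\theta)$.
   Context: $\mathcal{R}^\pi\in\mathbb{R}^{|\mathcal{S}|}$ is the reward vector under $\pi$, $r(\pi)=(\mu^\pi)^\top\mathcal{R}^\pi$, $e$ the all-ones vector. Bellman operator $\mathcal{T}(v)=\mathcal{R}^\pi-r(\pi)e+P^\pi v$; $\mathcal{T}^m$ is its $m$-fold composition; $\mathcal{T}^{(\lambda)}(v)=(1-\lambda)\sum_{m=0}^\infty\lambda^m\mathcal{T}^{m+1}(v)$. $D=\mathrm{diag}(\mu^\pi)$, $\|x\|_D=\sqrt{x^\top Dx}$. $W_\Phi=\{\Phi\theta:\theta\in\mathbb{R}^d\}$ and $\Pi_{D,W}$ denotes the $\|\cdot\|_D$-orthogonal projection onto a subspace $W$. $S_{\Phi,e}=\mathrm{span}\{\theta\in\mathbb{R}^d:\Phi\theta=e\}$ (equal to $\{c\theta_e:c\in\mathbb{R}\}$ if some $\theta_e$ satisfies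 $\Phi\theta_e=e$, and $\{0\}$ otherwise); $E_{\Phi,e}$ is the orthogonal complement of $S_{\Phi,e}$ in $\mathbb{R}^d$; $W_{E_{\Phi,e}}=\{\Phi\theta:\theta\in E_{\Phi,e}\}$. *)

From HB Require Import structures.
From mathcomp Require Import all_boot all_order all_algebra.
From mathcomp Require Import all_classical all_reals all_analysis.
Set Implicit Arguments. Unset Strict Implicit. Unset Printing Implicit Defensive.
Import Order.TTheory GRing.Theory Num.Theory.
Import numFieldNormedType.Exports.
Local Open Scope ring_scope.
Local Open Scope classical_set_scope.

Section Defs.
Variables (R : realType) (n : nat).

Definition stochastic (P : 'M[R]_n) : Prop :=
  (forall i j, 0 <= P i j) /\ (forall i, \sum_j P i j = 1).

Definition irreducible (P : 'M[R]_n) : Prop :=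
  forall i j, exists k : nat, 0 < (P ^+ k) i j.

(* aperiodic: for every state, the gcd of the return times {k>0 | P^k i i > 0}
   is 1, i.e. no integer d > 1 divides all of them *)
Definition aperiodic (P : 'M[R]_n) : Prop :=
  forall (i : 'I_n) (d : nat), (1 < d)%N ->
    ~ (forall k : nat, (0 < k)%N -> 0 < (P ^+ k) i i -> (d %| k)%N).

Definition stationary_dist (P : 'M[R]_n) (mu : 'rV[R]_n) : Prop :=
  (forall i, 0 <= mu 0 i) /\ \sum_i mu 0 i = 1 /\ mu *m P = mu.

Definition ones : 'cV[R]_n := const_mx 1.

Definition avg_reward (mu : 'rV[R]_n) (Rv : 'cV[R]_n) : R := (mu *m Rv) 0 0.

Definition bellman (P : 'M[R]_n) (mu : 'rV[R]_n) (Rv : 'cV[R]_n) (v : 'cV[R]_n)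
  : 'cV[R]_n := Rv - avg_reward mu Rv *: ones + P *m v.

Definition bellman_lambda (P : 'M[R]_n) (mu : 'rV[R]_n) (Rv : 'cV[R]_n)
  (lam : R) (v : 'cV[R]_n) : 'cV[R]_n :=
  \col_i limn ((series (fun m : nat =>
     (1 - lam) * lam ^+ m * (iter m.+1 (bellman P mu Rv) v) i 0)) : R^nat).

(* D-weighted inner product <x, y>_D = x^T diag(mu) y *)
Definition inner_D (mu : 'rV[R]_n) (x y : 'cV[R]_n) : R :=
  \sum_i mu 0 i * x i 0 * y i 0.

Definition is_projD (mu : 'rV[R]_n) (W : set 'cV[R]_n) (x p : 'cV[R]_n) : Prop :=
  W p /\ forall w, W w -> inner_D mu (x - p) w = 0.

End Defs.

Section Feat.
Variables (R : realType) (n d : nat) (Phi : 'M[R]_(n, d)).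

Definition W_of (A : set 'cV[R]_d) : set 'cV[R]_n := [set Phi *m t | t in A].

Definition dotd (s t : 'cV[R]_d) : R := \sum_i s i 0 * t i 0.

Definition S_Phi_e : set 'cV[R]_d :=
  [set t | exists (k : nat) (c : 'I_k -> R) (v : 'I_k -> 'cV[R]_d),
     (forall i, Phi *m v i = ones R n) /\ t = \sum_i c i *: v i].

Definition E_Phi_e : set 'cV[R]_d :=
  [set t | forall s, S_Phi_e s -> dotd s t = 0].

End Feat.

From HB Require Import structures.
From mathcomp Require Import all_boot all_order all_algebra.
From mathcomp Require Import all_classical all_reals all_analysis.
From mathcomp Require Import ring lra.
Import Order.TTheory GRing.Theory Num.Theory.
Import numFieldNormedType.Exports.
Local Open Scope ring_scope.
Local Open Scope classical_set_scope.
Set Implicit Arguments. Unset Strict Implicit.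

(* The operator [T^(lam)] is affine: [T^(lam) v = (I - lam P)^-1 c + P^(lam) v]
   with [c = R - r(pi) e] and [P^(lam) = (1 - lam) (I - lam P)^-1 P], a stochastic
   matrix with stationary distribution [mu].  Hence [Phi theta] solves the equation
   projected on [W_A] iff [<t, q - M theta> = 0] for all [t] in [A], where
   [M = Phi^T D (I - P^(lam)) Phi].  Writing [v = (I - lam P) w],
     [<(I - P^(lam)) v, v>_D
        = (1 - lam)/2 (|w|_D^2 - |P w|_D^2) + (1 + lam)/2 |w - P w|_D^2],
   which is nonnegative (Jensen) and vanishes only if [P w = w], i.e. if [w] and [v]
   are constant (irreducibility).  So [M] is positive semidefinite with null cone
   [S_{Phi,e} = span rho], and [rho] is annihilated by [M] on both sides and by [q];
   then [M + rho rho^T] is invertible, its solution is the unique solution orthogonal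
   to [rho], and every solution differs from it by an element of [S_{Phi,e}]. *)

Section InnerD.
Variables (R : realType) (n : nat).
Implicit Types (mu : 'rV[R]_n) (x y z : 'cV[R]_n).

Lemma innerC mu x y : inner_D mu x y = inner_D mu y x.
Proof. by apply: eq_bigr => i _; ring. Qed.

Lemma innerDl mu x y z : inner_D mu (x + y) z = inner_D mu x z + inner_D mu y z.
Proof. rewrite /inner_D -big_split; apply: eq_bigr => i _; rewrite !mxE /=; ring. Qed.

Lemma innerZl mu a x y : inner_D mu (a *: x) y = a * inner_D mu x y.
Proof. rewrite /inner_D mulr_sumr; apply: eq_bigr => i _; rewrite !mxE; ring. Qed.

Lemma innerBl mu x y z : inner_D mu (x - y) z = inner_D mu x z - inner_D mu y z.
Proof. by rewrite innerDl -scaleN1r innerZl mulN1r. Qed.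

Lemma innerZr mu a x y : inner_D mu y (a *: x) = a * inner_D mu y x.
Proof. by rewrite innerC innerZl innerC. Qed.

Lemma innerBr mu x y z : inner_D mu z (x - y) = inner_D mu z x - inner_D mu z y.
Proof. by rewrite innerC innerBl !(innerC mu z). Qed.

Lemma innerE mu x y : inner_D mu x y = (y^T *m diag_mx mu *m x) 0 0.
Proof.
rewrite /inner_D mul_mx_diag mxE; apply: eq_bigr => i _; rewrite !mxE; ring.
Qed.

Lemma inner_onesr mu x : inner_D mu x (ones R n) = (mu *m x) 0 0.
Proof. rewrite /inner_D mxE; apply: eq_bigr => i _; rewrite !mxE; ring. Qed.

Lemma inner_ge0 mu x : (forall i, 0 <= mu 0 i) -> 0 <= inner_D mu x x.
Proof.
move=> mu_ge0; apply: sumr_ge0 => i _.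
by rewrite -mulrA mulr_ge0 // -expr2 sqr_ge0.
Qed.

Lemma inner_eq0 mu x : (forall i, 0 < mu 0 i) -> inner_D mu x x = 0 -> x = 0.
Proof.
move=> mu_gt0 /eqP; rewrite psumr_eq0 => [/allP x0|i _]; last first.
  by rewrite -mulrA mulr_ge0 ?(ltW (mu_gt0 i)) // -expr2 sqr_ge0.
apply/matrixP => i j; rewrite ord1 mxE.
have := x0 i (mem_index_enum _); rewrite -mulrA mulf_eq0 gt_eqF //=.
by rewrite -expr2 sqrf_eq0 => /eqP.
Qed.

End InnerD.

Section Dotd.
Variables (R : realType) (d : nat).
Implicit Types (s t x y : 'cV[R]_d).

Lemma dotdC s t : dotd s t = dotd t s.
Proof. by apply: eq_bigr => i _; rewrite mulrC. Qed.

Lemma dotdDr s x y : dotd s (x + y) = dotd s x + dotd s y.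
Proof. by rewrite /dotd -big_split; apply: eq_bigr => i _; rewrite mxE mulrDr. Qed.

Lemma dotdBr s x y : dotd s (x - y) = dotd s x - dotd s y.
Proof. by rewrite /dotd -sumrB; apply: eq_bigr => i _; rewrite !mxE mulrBr. Qed.

Lemma dotdZr k s t : dotd s (k *: t) = k * dotd s t.
Proof. by rewrite /dotd mulr_sumr; apply: eq_bigr => i _; rewrite mxE mulrCA. Qed.

Lemma dotdZl k s t : dotd (k *: s) t = k * dotd s t.
Proof. by rewrite dotdC dotdZr dotdC. Qed.

Lemma dotd0r s : dotd s 0 = 0.
Proof. by rewrite -(scale0r (0 : 'cV_d)) dotdZr mul0r. Qed.

Lemma dotd0l t : dotd 0 t = 0.
Proof. by rewrite dotdC dotd0r. Qed.

Lemma dotd_eq0 s : dotd s s = 0 -> s = 0.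
Proof.
move/eqP; rewrite psumr_eq0 => [/allP s0|i _]; last by rewrite -expr2 sqr_ge0.
apply/matrixP => i j; rewrite ord1 mxE.
by have := s0 i (mem_index_enum _); rewrite -expr2 sqrf_eq0 => /eqP.
Qed.

Lemma eq_dotd x y : (forall t, dotd t x = dotd t y) -> x = y.
Proof.
move=> xy; apply/eqP; rewrite -subr_eq0; apply/eqP/dotd_eq0.
by rewrite dotdBr xy subrr.
Qed.

Lemma dotdE s t : dotd s t = (s^T *m t) 0 0.
Proof. by rewrite mxE; apply: eq_bigr => i _; rewrite mxE. Qed.

Lemma mulmx_outerE s t : s *m s^T *m t = dotd s t *: s.
Proof. by rewrite -mulmxA [s^T *m t]mx11_scalar mul_mx_scalar dotdE. Qed.

End Dotd.

Lemma mulmx_onesE (R : realType) m n (A : 'M[R]_(m, n)) i :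
  (A *m ones R n) i 0 = \sum_j A i j.
Proof. by rewrite mxE; apply: eq_bigr => j _; rewrite mxE mulr1. Qed.

Section Stochastic.
Variables (R : realType) (n : nat) (P : 'M[R]_n).
Hypotheses (hP : stochastic P) (hI : irreducible P).

Lemma stochastic_ones : P *m ones R n = ones R n.
Proof. by apply/matrixP => i j; rewrite ord1 mulmx_onesE (proj2 hP) mxE. Qed.

Lemma stochastic_exp k : stochastic (P ^+ k).
Proof.
elim: k => [|k [ge0 sum1]].
  split=> [i j|i]; first by rewrite expr0 mxE; case: (i == j).
  by rewrite -mulmx_onesE expr0 mul1mx mxE.
have Pk1 : P ^+ k *m ones R n = ones R n.
  by apply/matrixP => i j; rewrite ord1 mulmx_onesE sum1 mxE.
split=> [i j|i].
  2: by rewrite -mulmx_onesE exprS -mulmxE -mulmxA Pk1 stochastic_ones mxE.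
rewrite exprS -mulmxE mxE; apply: sumr_ge0 => l _.
by rewrite mulr_ge0 ?(proj1 hP) ?ge0.
Qed.

Lemma stochastic_mulmx_le (w : 'cV[R]_n) b :
  (forall k, `|w k 0| <= b) -> forall j, `|(P *m w) j 0| <= b.
Proof.
move=> wb j; rewrite mxE (le_trans (ler_norm_sum _ _ _)) //.
rewrite -[b]mul1r -(proj2 hP j) mulr_suml; apply: ler_sum => k _.
by rewrite normrM ger0_norm ?ler_wpM2l ?(proj1 hP).
Qed.

Lemma stochastic_sqr_le (w : 'cV[R]_n) i :
  ((P *m w) i 0) ^+ 2 <= (P *m map_mx (fun a => a ^+ 2) w) i 0.
Proof.
set m := (P *m w) i 0.
have : 0 <= \sum_j P i j * (w j 0 - m) ^+ 2.
  by apply: sumr_ge0 => j _; rewrite mulr_ge0 ?sqr_ge0 ?(proj1 hP).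
have -> : \sum_j P i j * (w j 0 - m) ^+ 2 =
    (P *m map_mx (fun a => a ^+ 2) w) i 0 - 2 * m * m + m ^+ 2 * \sum_j P i j.
  rewrite mxE; have mE : m = \sum_j P i j * w j 0 by rewrite /m mxE.
  rewrite {3}mE !mulr_sumr -sumrN -!big_split /=.
  by apply: eq_bigr => j _; rewrite mxE; ring.
by rewrite (proj2 hP) mulr1 expr2; lra.
Qed.

Lemma harmonic_const w : P *m w = w -> exists k, w = k *: ones R n.
Proof.
move=> Pw; case: (pickP (@predT 'I_n)) => [j0 _|n0]; last first.
  by exists 0; apply/matrixP => i; have := n0 i.
have [m _ w_le] := @arg_maxP _ _ _ j0 xpredT (fun i => w i 0) isT.
exists (w m 0); apply/matrixP => j o; rewrite ord1 !mxE mulr1.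
have [k Pk_mj] := hI m j.
have [Pk_ge0 Pk_sum1] := stochastic_exp k.
have Pkw : P ^+ k *m w = w.
  by elim: (k) => [|k' IH]; rewrite ?expr0 ?mul1mx // exprS -mulmxE -mulmxA IH Pw.
have gap : \sum_l (P ^+ k) m l * (w m 0 - w l 0) = 0.
  under eq_bigr do rewrite mulrBr.
  rewrite sumrB -mulr_suml Pk_sum1 mul1r.
  by have := congr1 (fun v : 'cV_n => v m 0) Pkw; rewrite mxE => ->; rewrite subrr.
have gap_ge0 l : 0 <= (P ^+ k) m l * (w m 0 - w l 0).
  by rewrite mulr_ge0 // subr_ge0; apply: w_le.
have /(_ j isT) /eqP := psumr_eq0P (fun l _ => gap_ge0 l) gap.
by rewrite mulf_eq0 gt_eqF //= subr_eq0 => /eqP ->.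
Qed.

Variable mu : 'rV[R]_n.
Hypothesis hmu : stationary_dist P mu.

Lemma stationary_exp k : mu *m P ^+ k = mu.
Proof.
have [_ [_ muP]] := hmu; elim: k => [|k IH]; first by rewrite expr0 mulmx1.
by rewrite exprSr -mulmxE mulmxA IH muP.
Qed.

Lemma inner_contract w : inner_D mu (P *m w) (P *m w) <= inner_D mu w w.
Proof.
have [mu_ge0 [_ muP]] := hmu.
apply: (@le_trans _ _ (\sum_i mu 0 i * (P *m map_mx (fun a => a ^+ 2) w) i 0)).
  by apply: ler_sum => i _; rewrite -mulrA ler_wpM2l // -expr2 stochastic_sqr_le.
rewrite /inner_D; under eq_bigr do rewrite mxE mulr_sumr.
rewrite exchange_big /= le_eqVlt; apply/orP; left; apply/eqP; apply: eq_bigr => j _.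
have := congr1 (fun v : 'rV_n => v 0 j) muP; rewrite mxE => <-.
by rewrite !mulr_suml; apply: eq_bigr => i _; rewrite !mxE; ring.
Qed.

Lemma stationary_gt0 j : 0 < mu 0 j.
Proof.
have [mu_ge0 [mu_sum1 _]] := hmu.
have [i mu_i] : exists i, 0 < mu 0 i.
  apply/not_existsP => mu0; move/eqP: mu_sum1; rewrite big1 ?(eq_sym 0) ?oner_eq0 //.
  by move=> i _; apply/eqP; rewrite eq_le mu_ge0 andbT leNgt; apply/negP => /(mu0 i).
have [k Pk_ij] := hI i j.
have := congr1 (fun v : 'rV_n => v 0 j) (stationary_exp k); rewrite mxE => <-.
rewrite (bigD1 i) //= ltr_wpDr ?mulr_gt0 //.
by apply: sumr_ge0 => l _; rewrite mulr_ge0 ?(proj1 (stochastic_exp k)).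
Qed.

End Stochastic.

Section NatMulExpr.
Variable R : realType.

Lemma natr_mul_expr_le (r : R) N : 0 <= r -> r < 1 ->
  N%:R * r ^+ N * (1 - r) <= 1 - r ^+ N.
Proof.
move=> r0 r1; elim: N => [|N IH]; first by rewrite !mul0r expr0 subrr.
have t0 : 0 <= r ^+ N by rewrite exprn_ge0.
have t1 : r ^+ N <= 1 by rewrite exprn_ile1 // ltW.
rewrite exprS -[N.+1]addn1 natrD.
set t := r ^+ N in IH t0 t1 *.
have h1 : r * (N%:R * t * (1 - r)) <= r * (1 - t) by rewrite ler_wpM2l.
have h2 : r * t * (1 - r) <= 1 - r.
  rewrite -[X in _ <= X]mul1r ler_wpM2r ?subr_ge0 ?ltW //.
  by apply: le_lt_trans (ler_wpM2l r0 t1) _; rewrite mulr1.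
nra.
Qed.

(* Write [lam = r * rho] with [r, rho < 1]: [N r^N] is bounded by [1 / (1 - r)]
   and [rho^N] tends to [0]. *)
Lemma cvg_natr_mul_expr (lam : R) : 0 <= lam -> lam < 1 ->
  (fun N : nat => N%:R * lam ^+ N) @ \oo --> (0 : R).
Proof.
move=> l0 l1; set rho := (1 + lam) / 2.
have rho0 : 0 < rho by rewrite /rho; lra.
have rho1 : rho < 1 by rewrite /rho; lra.
set r := lam / rho.
have r0 : 0 <= r by rewrite /r divr_ge0 // ltW.
have r1 : r < 1 by rewrite /r ltr_pdivrMr // mul1r /rho; lra.
have lamE : lam = r * rho by rewrite /r divfK // gt_eqF.
apply: (@squeeze_cvgr _ _ _ _ (cst 0) (geometric ((1 - r)^-1) rho)).
- near=> N; apply/andP; split; first by rewrite mulr_ge0 // exprn_ge0.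
  rewrite /geometric /= lamE exprMn mulrA.
  apply: ler_wpM2r; first by rewrite exprn_ge0 // ltW.
  rewrite -[X in _ <= X]div1r ler_pdivlMr ?subr_gt0 //.
  by rewrite (le_trans (natr_mul_expr_le N r0 r1)) // lerBlDr lerDl exprn_ge0.
- exact: cvg_cst.
- by apply: cvg_geometric; rewrite ger0_norm // ltW.
Unshelve. all: by end_near.
Qed.

End NatMulExpr.

Lemma cvg_mulmx_coord0 (R : realType) m n (B : 'M[R]_(m, n))
    (y : nat -> 'cV[R]_n) i :
  (forall k, (fun N => y N k 0) @ \oo --> (0 : R)) ->
  (fun N => (B *m y N) i 0) @ \oo --> (0 : R).
Proof.
move=> y0; under eq_cvg do rewrite mxE.
suff : \sum_k B i k * y N k 0 @[N --> \oo] --> \sum_k B i k * 0.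
  by rewrite big1 => [|k _]; [apply | rewrite mulr0].
by apply: cvg_big => [|k _]; [exact: add_continuous | exact: cvgMl_tmp].
Qed.

Lemma mulmx_inj_unitmx (R : fieldType) n (A : 'M[R]_n) :
  (forall x : 'cV[R]_n, A *m x = 0 -> x = 0) -> A \in unitmx.
Proof.
move=> A_inj; rewrite -unitmx_tr -row_free_unit; apply: inj_row_free => v vA.
have : A *m v^T = 0 by rewrite -(trmxK (A *m v^T)) trmx_mul trmxK vA trmx0.
by move/A_inj => /(congr1 trmx); rewrite trmxK trmx0.
Qed.

Section Resolvent.
Variables (R : realType) (n : nat) (P : 'M[R]_n) (lam : R).

Definition resolvent := invmx (1%:M - lam *: P).

(* [P^(lam) = (1 - lam) sum_m lam^m P^(m+1)], the transition matrix of TD(lam). *)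
Definition Plambda := (1 - lam) *: (resolvent *m P).

Hypotheses (hP : stochastic P) (l0 : 0 <= lam) (l1 : lam < 1).

Lemma resolvent_unit : (1%:M - lam *: P) \in unitmx.
Proof.
apply: mulmx_inj_unitmx => x; rewrite mulmxBl mul1mx -scalemxAl.
move=> /eqP; rewrite subr_eq0 => /eqP xE.
case: (pickP (@predT 'I_n)) => [j0 _|n0]; last by apply/matrixP => i; have := n0 i.
have [m _ x_le] := @arg_maxP _ _ _ j0 xpredT (fun i => `|x i 0|) isT.
have xm0 : `|x m 0| <= 0.
  have : `|x m 0| * (1 - lam) <= 0.
    rewrite mulrBr mulr1 subr_le0 mulrC {1}xE mxE normrM ger0_norm // ler_wpM2l //.
    by apply: stochastic_mulmx_le => // k; apply: x_le.
  by rewrite pmulr_lle0 // subr_gt0.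
apply/matrixP => i j; rewrite ord1 mxE; apply: normr0_eq0; apply/eqP.
by rewrite eq_le normr_ge0 andbT (le_trans (x_le i isT)).
Qed.

Lemma resolventK (w : 'cV[R]_n) : resolvent *m ((1%:M - lam *: P) *m w) = w.
Proof. by rewrite mulKmx // resolvent_unit. Qed.

Lemma resolventKV (v : 'cV[R]_n) : (1%:M - lam *: P) *m (resolvent *m v) = v.
Proof. by rewrite mulKVmx // resolvent_unit. Qed.

Lemma Plambda_mulmx (w : 'cV[R]_n) :
  Plambda *m ((1%:M - lam *: P) *m w) = (1 - lam) *: (P *m w).
Proof.
have PN : P *m (1%:M - lam *: P) = (1%:M - lam *: P) *m P.
  by rewrite mulmxBr mulmxBl mul1mx mulmx1 -scalemxAl -scalemxAr.
by rewrite /Plambda -scalemxAl -!mulmxA (mulmxA P) PN -mulmxA resolventK.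
Qed.

Let lam1_neq0 : 1 - lam != 0.
Proof. by rewrite subr_eq0 eq_sym lt_eqF. Qed.

Lemma Plambda_ones : Plambda *m ones R n = ones R n.
Proof.
have N1 : (1%:M - lam *: P) *m ones R n = (1 - lam) *: ones R n.
  by rewrite mulmxBl mul1mx -scalemxAl stochastic_ones // scalerBl scale1r.
apply: (scalerI lam1_neq0).
by rewrite scalemxAr -{1}N1 Plambda_mulmx stochastic_ones.
Qed.

Variable mu : 'rV[R]_n.
Hypothesis hmu : stationary_dist P mu.

Lemma stationary_resolvent : mu *m resolvent = (1 - lam)^-1 *: mu.
Proof.
have muN : mu *m (1%:M - lam *: P) = (1 - lam) *: mu.
  by rewrite mulmxBr mulmx1 -scalemxAr (proj2 (proj2 hmu)) scalerBl scale1r.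
apply: (scalerI lam1_neq0).
by rewrite scalerA mulfV // scale1r scalemxAl -muN mulmxK // resolvent_unit.
Qed.

Lemma stationary_Plambda : mu *m Plambda = mu.
Proof.
rewrite /Plambda -scalemxAr mulmxA stationary_resolvent -scalemxAl.
by rewrite (proj2 (proj2 hmu)) scalerA mulfV // scale1r.
Qed.

End Resolvent.

Definition centered_reward (R : realType) n (mu : 'rV[R]_n) (Rv : 'cV[R]_n) :=
  Rv - avg_reward mu Rv *: ones R n.

Lemma mulmx_centered_reward (R : realType) n (mu : 'rV[R]_n) (Rv : 'cV[R]_n) :
  \sum_i mu 0 i = 1 -> mu *m centered_reward mu Rv = 0.
Proof.
move=> mu_sum1.
have mu1 : mu *m ones R n = 1%:M.
  by apply/matrixP => i j; rewrite !ord1 mulmx_onesE mu_sum1 mxE.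
rewrite /centered_reward mulmxBr -scalemxAr mu1 scalemx1.
by rewrite /avg_reward -mx11_scalar subrr.
Qed.

Section BellmanLambda.
Variables (R : realType) (n : nat) (P : 'M[R]_n) (mu : 'rV[R]_n).
Variables (Rv : 'cV[R]_n) (lam : R) (v : 'cV[R]_n).
Hypotheses (hP : stochastic P) (l0 : 0 <= lam) (l1 : lam < 1).

Let c := centered_reward mu Rv.
Let u m := iter m.+1 (bellman P mu Rv) v.
Let tail N := lam ^+ N.+1 *: c + ((1 - lam) * lam ^+ N) *: u N.

Lemma iter_bellman_le : exists a C : R, forall N j, `|u N j 0| <= a + N%:R * C.
Proof.
have coord_le (w : 'cV[R]_n) j : `|w j 0| <= \sum_k `|w k 0|.
  by rewrite (bigD1 j) //= lerDl sumr_ge0.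
exists (\sum_k `|u 0 k 0|), (\sum_k `|c k 0|).
elim=> [|N IH] j; first by rewrite mul0r addr0 coord_le.
have -> : u N.+1 = c + P *m u N by [].
rewrite mxE (le_trans (ler_normD _ _)) // -[N.+1]addn1 natrD mulrDl mul1r addrA addrC.
by rewrite lerD ?coord_le ?stochastic_mulmx_le.
Qed.

Lemma td_partial_sumE N :
  (1%:M - lam *: P) *m \sum_(m < N) ((1 - lam) * lam ^+ m) *: u m =
  c + (1 - lam) *: (P *m v) - tail N.
Proof.
have uS m : u m.+1 = c + P *m u m by [].
elim: N => [|N IH].
  rewrite big_ord0 mulmx0 /tail expr1 expr0 mulr1 (_ : u 0 = c + P *m v) //.
  by apply/matrixP => i j; rewrite !mxE; ring.
rewrite big_ord_recr /= mulmxDr IH -scalemxAr mulmxBl mul1mx -scalemxAl /tail uS.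
by apply/matrixP => i j; rewrite !mxE !exprS; ring.
Qed.

Lemma tail_cvg0 k : (fun N => tail N k 0) @ \oo --> (0 : R).
Proof.
have [a [C u_le]] := iter_bellman_le.
have lamN0 : (fun N => lam ^+ N) @ \oo --> (0 : R).
  by apply: cvg_expr; rewrite ger0_norm.
have lamNu0 : (fun N => lam ^+ N * u N k 0) @ \oo --> (0 : R).
  apply/norm_cvg0P.
  apply: (@squeeze_cvgr _ _ _ _ (cst 0)
    (fun N => a * lam ^+ N + C * (N%:R * lam ^+ N))).
  - near=> N; rewrite normr_ge0 /= normrM ger0_norm ?exprn_ge0 //.
    have -> : a * lam ^+ N + C * (N%:R * lam ^+ N) = lam ^+ N * (a + N%:R * C) by ring.
    by rewrite ler_wpM2l ?exprn_ge0.
  - exact: cvg_cst.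
  - have -> : (0 : R) = a * 0 + C * 0 by ring.
    exact: cvgD (cvgMl_tmp lamN0) (cvgMl_tmp (cvg_natr_mul_expr l0 l1)).
have -> : (fun N => tail N k 0) =
    (fun N => lam * c k 0 * lam ^+ N + (1 - lam) * (lam ^+ N * u N k 0)).
  by apply/funext => N; rewrite !mxE exprS; ring.
have -> : (0 : R) = lam * c k 0 * 0 + (1 - lam) * 0 by ring.
exact: cvgD (cvgMl_tmp lamN0) (cvgMl_tmp lamNu0).
Unshelve. all: by end_near.
Qed.

Lemma bellman_lambdaE :
  bellman_lambda P mu Rv lam v = resolvent P lam *m c + Plambda P lam *m v.
Proof.
set x := resolvent P lam *m c + Plambda P lam *m v.
have sumE N :
    \sum_(m < N) ((1 - lam) * lam ^+ m) *: u m = x - resolvent P lam *m tail N.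
  have := congr1 (mulmx (resolvent P lam)) (td_partial_sumE N).
  rewrite resolventK // => ->.
  by rewrite mulmxBr mulmxDr /x /Plambda -scalemxAl -scalemxAr mulmxA.
apply/matrixP => i j; rewrite ord1 mxE; apply: cvg_lim => //.
have -> : series (fun m => (1 - lam) * lam ^+ m * u m i 0) =
    (fun N => x i 0 - (resolvent P lam *m tail N) i 0).
  apply/funext => N; rewrite seriesEnat /= big_mkord.
  transitivity ((\sum_(m < N) ((1 - lam) * lam ^+ m) *: u m) i 0).
    by rewrite summxE; apply: eq_bigr => m _; rewrite [RHS]mxE.
  by rewrite (sumE N) mxE [in X in _ + X]mxE.
have lim := cvgB (cvg_cst (x i 0)) (cvg_mulmx_coord0 (resolvent P lam) i tail_cvg0).
rewrite subr0 in lim; exact: lim.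
Qed.

End BellmanLambda.

Section TDForm.
Variables (R : realType) (n : nat) (P : 'M[R]_n) (mu : 'rV[R]_n) (lam : R).
Hypotheses (hP : stochastic P) (hI : irreducible P) (hmu : stationary_dist P mu).
Hypotheses (l0 : 0 <= lam) (l1 : lam < 1).

Let lam1_gt0 : 0 < 1 - lam. Proof. by rewrite subr_gt0. Qed.
Let lam1'_gt0 : 0 < 1 + lam. Proof. by rewrite (lt_le_trans ltr01) // lerDl. Qed.

Lemma td_formE v (w := resolvent P lam *m v) :
  inner_D mu (v - Plambda P lam *m v) v =
  (1 - lam) / 2 * (inner_D mu w w - inner_D mu (P *m w) (P *m w)) +
  (1 + lam) / 2 * inner_D mu (w - P *m w) (w - P *m w).
Proof.
have Lv : Plambda P lam *m v = (1 - lam) *: (P *m w).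
  by rewrite -{1}[v](resolventKV hP l0 l1) Plambda_mulmx.
have vE : v = w - lam *: (P *m w).
  by rewrite -{1}[v](resolventKV hP l0 l1) -/w mulmxBl mul1mx -scalemxAl.
have -> : v - Plambda P lam *m v = w - P *m w.
  by rewrite Lv {1}vE; apply/matrixP => i j; rewrite !mxE; ring.
rewrite [in inner_D _ _ v]vE !innerBl !innerBr !innerZr (innerC mu (P *m w) w).
by field.
Qed.

Let td_form_terms_ge0 (w : 'cV[R]_n) :
  0 <= (1 - lam) / 2 * (inner_D mu w w - inner_D mu (P *m w) (P *m w)) /\
  0 <= (1 + lam) / 2 * inner_D mu (w - P *m w) (w - P *m w).
Proof.
have mu_ge0 := proj1 hmu.
by split; rewrite mulr_ge0 ?inner_ge0 ?subr_ge0 ?inner_contract ?divr_ge0 ?ltW.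
Qed.

Lemma td_form_ge0 v : 0 <= inner_D mu (v - Plambda P lam *m v) v.
Proof.
by have [? ?] := td_form_terms_ge0 (resolvent P lam *m v); rewrite td_formE addr_ge0.
Qed.

Lemma td_form_eq0 v :
  inner_D mu (v - Plambda P lam *m v) v = 0 -> exists k, v = k *: ones R n.
Proof.
set w := resolvent P lam *m v; have [contr_ge0 gap_ge0] := td_form_terms_ge0 w.
rewrite td_formE -/w => /eqP; rewrite paddr_eq0 // => /andP[_].
rewrite mulf_eq0 gt_eqF ?divr_gt0 //= => /eqP/(inner_eq0 (stationary_gt0 hP hI hmu)).
move/eqP; rewrite subr_eq0 eq_sym => /eqP/(harmonic_const hP hI)[k wk].
exists ((1 - lam) * k).
rewrite -[v](resolventKV hP l0 l1) -/w mulmxBl mul1mx -scalemxAl wk.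
by rewrite -scalemxAr (stochastic_ones hP) scalerA -scalerBl mulrBl mul1r.
Qed.

End TDForm.

Section Galerkin.
Variables (R : realType) (d : nat) (M : 'M[R]_d) (q rho : 'cV[R]_d).
Hypotheses (M_ge0 : forall t, 0 <= dotd t (M *m t))
  (M_null : forall t, dotd t (M *m t) = 0 -> exists k, t = k *: rho).
Hypotheses (M_rho : M *m rho = 0) (rho_M : forall t, dotd rho (M *m t) = 0)
  (rho_q : dotd rho q = 0).

Lemma null_perp_eq0 t : dotd t (M *m t) = 0 -> dotd rho t = 0 -> t = 0.
Proof.
move=> /M_null[k ->]; rewrite dotdZr => /eqP; rewrite mulf_eq0.
by case/orP => [/eqP->|/eqP/dotd_eq0->]; rewrite ?scale0r ?scaler0.
Qed.

(* Adding [rho rho^T] removes the null direction of [M] without changing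
   the solutions orthogonal to [rho]. *)
Lemma galerkin_unit : M + rho *m rho^T \in unitmx.
Proof.
apply: mulmx_inj_unitmx => t Kt.
have : dotd t ((M + rho *m rho^T) *m t) = dotd t (M *m t) + dotd rho t ^+ 2.
  by rewrite mulmxDl dotdDr mulmx_outerE dotdZr (dotdC t rho) expr2.
rewrite Kt dotd0r => /esym/eqP; rewrite paddr_eq0 ?sqr_ge0 // sqrf_eq0.
move=> /andP[/eqP Mt /eqP rt].
exact: null_perp_eq0.
Qed.

Definition galerkin_sol := invmx (M + rho *m rho^T) *m q.

Lemma galerkin_solK : (M + rho *m rho^T) *m galerkin_sol = q.
Proof. by rewrite mulKVmx // galerkin_unit. Qed.

Lemma galerkin_sol_perp : dotd rho galerkin_sol = 0.
Proof.
have := congr1 (dotd rho) galerkin_solK.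
rewrite mulmxDl dotdDr rho_M add0r mulmx_outerE dotdZr rho_q => /eqP.
rewrite mulf_eq0 => /orP[/eqP //|/eqP/dotd_eq0 ->]; exact: dotd0l.
Qed.

Lemma galerkin_solE : M *m galerkin_sol = q.
Proof.
by have := galerkin_solK; rewrite mulmxDl mulmx_outerE galerkin_sol_perp scale0r addr0.
Qed.

Lemma galerkin_solP theta :
  M *m theta = q <-> exists k, theta = galerkin_sol + k *: rho.
Proof.
split=> [Mq|[k ->]]; last first.
  by rewrite mulmxDr -scalemxAr M_rho scaler0 addr0 galerkin_solE.
have [k tk] : exists k, theta - galerkin_sol = k *: rho.
  by apply: M_null; rewrite mulmxBr Mq galerkin_solE subrr dotd0r.
by exists k; rewrite -tk addrC subrK.
Qed.

Lemma galerkin_sol_unique theta : dotd rho theta = 0 ->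
  (forall t, dotd rho t = 0 -> dotd t (M *m theta) = dotd t q) ->
  theta = galerkin_sol.
Proof.
move=> rt Mq; have perp : dotd rho (theta - galerkin_sol) = 0.
  by rewrite dotdBr rt galerkin_sol_perp subrr.
apply/eqP; rewrite -subr_eq0; apply/eqP/null_perp_eq0 => //.
by rewrite mulmxBr galerkin_solE dotdBr Mq // subrr.
Qed.

End Galerkin.

Section Features.
Variables (R : realType) (n d : nat) (Phi : 'M[R]_(n, d)).

Lemma full_col_rank_inj :
  \rank Phi = d -> injective (mulmx Phi : 'cV[R]_d -> 'cV[R]_n).
Proof.
move=> rk x y /eqP; rewrite -subr_eq0 -mulmxBr => /eqP Phixy.
apply/eqP; rewrite -subr_eq0; apply/eqP.
have : (x - y)^T *m Phi^T == 0 by rewrite -trmx_mul Phixy trmx0.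
rewrite mulmx_free_eq0 /row_free ?mxrank_tr ?rk //.
by move=> /eqP/(congr1 trmx); rewrite trmxK trmx0.
Qed.

Lemma inner_D_mulmxE (mu : 'rV[R]_n) x t :
  inner_D mu x (Phi *m t) = dotd t (Phi^T *m diag_mx mu *m x).
Proof. by rewrite innerE dotdE trmx_mul !mulmxA. Qed.

Lemma is_projD_W_ofP (mu : 'rV[R]_n) (A : set 'cV[R]_d) x theta :
  injective (mulmx Phi : 'cV[R]_d -> 'cV[R]_n) ->
  is_projD mu (W_of Phi A) x (Phi *m theta) <->
  A theta /\ forall t, A t -> inner_D mu (x - Phi *m theta) (Phi *m t) = 0.
Proof.
move=> Phi_inj; split=> [[[t At /Phi_inj <-] orth]|[At orth]].
  by split=> // s As; apply: orth; exists s.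
by split=> [|_ [t As <-]]; [exists theta | apply: orth].
Qed.

Hypothesis Phi_inj : injective (mulmx Phi : 'cV[R]_d -> 'cV[R]_n).

Lemma S_Phi_eP t : S_Phi_e Phi t <-> exists k, Phi *m t = k *: ones R n.
Proof.
split=> [[m [c [v [Phiv ->]]]]|[k Phit]].
  exists (\sum_i c i); rewrite mulmx_sumr scaler_suml.
  by apply: eq_bigr => i _; rewrite -scalemxAr Phiv.
have [k0|k_neq0] := eqVneq k 0.
  have -> : t = 0 by apply: Phi_inj; rewrite Phit k0 scale0r mulmx0.
  by exists 0%N, (fun _ => 0), (fun _ => 0); split=> [[]//|]; rewrite big_ord0.
exists 1%N, (fun _ => k), (fun _ => k^-1 *: t); split=> [_|].
  by rewrite -scalemxAr Phit scalerA mulVf // scale1r.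
by rewrite big_ord1 scalerA mulfV // scale1r.
Qed.

Lemma S_Phi_e_line : exists rho, forall t, S_Phi_e Phi t <-> exists k, t = k *: rho.
Proof.
have [[te Phite]|none] := pselect (exists te, Phi *m te = ones R n).
  exists te => t; rewrite S_Phi_eP; split=> -[k tk]; exists k.
    by apply: Phi_inj; rewrite tk -scalemxAr Phite.
  by rewrite tk -scalemxAr Phite.
exists 0 => t; rewrite S_Phi_eP; split=> -[k tk]; exists 0.
  rewrite scaler0; apply: Phi_inj; rewrite mulmx0 tk.
  have [->|k_neq0] := eqVneq k 0; first by rewrite scale0r.
  by case: none; exists (k^-1 *: t); rewrite -scalemxAr tk scalerA mulVf // scale1r.
by rewrite tk scaler0 mulmx0 scale0r.
Qed.

End Features.

Lemma E_Phi_eP (R : realType) n d (Phi : 'M[R]_(n, d)) rho :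
  (forall t, S_Phi_e Phi t <-> exists k, t = k *: rho) ->
  forall t, E_Phi_e Phi t <-> dotd rho t = 0.
Proof.
move=> S_rho t; split=> [Et|rt s /S_rho[k ->]]; last by rewrite dotdZl rt mulr0.
by apply: Et; apply/S_rho; exists 1; rewrite scale1r.
Qed.

Section TDSystem.
Variables (R : realType) (n d : nat) (P : 'M[R]_n) (mu : 'rV[R]_n).
Variables (Rv : 'cV[R]_n) (lam : R) (Phi : 'M[R]_(n, d)).
Hypotheses (hP : stochastic P) (hI : irreducible P) (hmu : stationary_dist P mu).
Hypotheses (l0 : 0 <= lam) (l1 : lam < 1).

Definition td_matrix := Phi^T *m diag_mx mu *m ((1%:M - Plambda P lam) *m Phi).

Definition td_vector :=
  Phi^T *m diag_mx mu *m (resolvent P lam *m centered_reward mu Rv).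

Lemma td_matrixE s t : dotd t (td_matrix *m s) =
  inner_D mu (Phi *m s - Plambda P lam *m (Phi *m s)) (Phi *m t).
Proof.
by rewrite inner_D_mulmxE /td_matrix -mulmxA -[_ *m Phi *m s]mulmxA mulmxBl mul1mx.
Qed.

Lemma td_residualE theta t :
  inner_D mu (bellman_lambda P mu Rv lam (Phi *m theta) - Phi *m theta) (Phi *m t) =
  dotd t td_vector - dotd t (td_matrix *m theta).
Proof.
rewrite bellman_lambdaE // td_matrixE /td_vector -inner_D_mulmxE -innerBl.
by rewrite opprB addrA.
Qed.

Lemma projected_bellmanP (A : set 'cV[R]_d) theta :
  injective (mulmx Phi : 'cV[R]_d -> 'cV[R]_n) ->
  is_projD mu (W_of Phi A)
    (bellman_lambda P mu Rv lam (Phi *m theta)) (Phi *m theta) <->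
  A theta /\ forall t, A t -> dotd t (td_matrix *m theta) = dotd t td_vector.
Proof.
move=> Phi_inj; rewrite is_projD_W_ofP //.
split=> -[At orth]; split=> // t /orth; rewrite td_residualE.
  by move/eqP; rewrite subr_eq0 => /eqP ->.
by move=> ->; rewrite subrr.
Qed.

Lemma td_matrix_ge0 t : 0 <= dotd t (td_matrix *m t).
Proof. by rewrite td_matrixE td_form_ge0. Qed.

Lemma td_matrix_eq0 t :
  dotd t (td_matrix *m t) = 0 -> exists k, Phi *m t = k *: ones R n.
Proof. by rewrite td_matrixE => /(td_form_eq0 hP hI hmu l0 l1). Qed.

Section ConstantFeature.
Variables (s : 'cV[R]_d) (k : R).
Hypothesis Phis : Phi *m s = k *: ones R n.

Lemma td_matrix_const : td_matrix *m s = 0.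
Proof.
rewrite /td_matrix -mulmxA -[_ *m Phi *m s]mulmxA Phis mulmxBl mul1mx.
by rewrite -scalemxAr Plambda_ones // subrr mulmx0.
Qed.

Lemma const_td_matrix t : dotd s (td_matrix *m t) = 0.
Proof.
rewrite td_matrixE Phis innerZr inner_onesr mulmxBr (mulmxA mu (Plambda P lam)).
by rewrite stationary_Plambda // subrr mxE mulr0.
Qed.

Lemma const_td_vector : dotd s td_vector = 0.
Proof.
rewrite /td_vector -inner_D_mulmxE Phis innerZr inner_onesr mulmxA.
rewrite stationary_resolvent // -scalemxAl.
rewrite mulmx_centered_reward ?(proj1 (proj2 hmu)) //.
by rewrite scaler0 mxE mulr0.
Qed.

End ConstantFeature.

End TDSystem.

Theorem lemma3 (R : realType) (n d : nat)
  (P : 'M[R]_n) (Rv : 'cV[R]_n) (mu : 'rV[R]_n) (lam : R)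
  (Phi : 'M[R]_(n, d)) :
  stochastic P -> irreducible P -> aperiodic P -> stationary_dist P mu ->
  0 <= lam -> lam < 1 ->
  \rank Phi = d ->
  exists theta_star : 'cV[R]_d,
    E_Phi_e Phi theta_star /\
    is_projD mu (W_of Phi (E_Phi_e Phi))
      (bellman_lambda P mu Rv lam (Phi *m theta_star)) (Phi *m theta_star) /\
    (forall theta : 'cV[R]_d,
       is_projD mu (W_of Phi (E_Phi_e Phi))
         (bellman_lambda P mu Rv lam (Phi *m theta)) (Phi *m theta) ->
       theta = theta_star) /\
    (forall theta : 'cV[R]_d,
       is_projD mu (W_of Phi setT)
         (bellman_lambda P mu Rv lam (Phi *m theta)) (Phi *m theta) <->
       exists2 s, S_Phi_e Phi s & theta = theta_star + s).
Proof.
move=> hP hI _ hmu l0 l1 /full_col_rank_inj Phi_inj.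
have [rho S_rho] := S_Phi_e_line Phi_inj.
have E_rho := E_Phi_eP S_rho.
have [k Phi_rho] : exists k, Phi *m rho = k *: ones R n.
  by apply/(S_Phi_eP Phi_inj)/S_rho; exists 1; rewrite scale1r.
set M := td_matrix P mu lam Phi; set q := td_vector P mu Rv lam Phi.
have M_ge0 : forall t, 0 <= dotd t (M *m t) := td_matrix_ge0 Phi hP hmu l0 l1.
have M_null t : dotd t (M *m t) = 0 -> exists k, t = k *: rho.
  by move/(td_matrix_eq0 hP hI hmu l0 l1)/(S_Phi_eP Phi_inj)/S_rho.
have rho_M := const_td_matrix hP hmu l0 l1 Phi_rho.
have rho_q := const_td_vector Rv hP hmu l0 l1 Phi_rho.
have M_rho := td_matrix_const mu hP l0 l1 Phi_rho.
have solP := galerkin_solP M_ge0 M_null M_rho rho_M rho_q.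
have PBE A theta := projected_bellmanP mu Rv hP l0 l1 A theta Phi_inj.
have sol_perp := galerkin_sol_perp M_ge0 M_null rho_M rho_q.
exists (galerkin_sol M q rho); split; first exact/E_rho.
split; first by apply/PBE; split=> [|t _]; [apply/E_rho | rewrite galerkin_solE].
split=> theta.
  by move/PBE=> [/E_rho rt Mq]; apply: galerkin_sol_unique => // t /E_rho/Mq.
rewrite PBE; split=> [[_ Mq]|[s /S_rho[k' ->] ->]].
  have [k' ->] := (solP theta).1 (eq_dotd (fun t => Mq t I)).
  by exists (k' *: rho) => //; apply/S_rho; exists k'.
by split=> // t _; congr (dotd t _); apply/solP; exists k'.
Qed.
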